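(* Let $\Omega\subset\mathbb R^d$ be a bounded Borel set, $f:\Omega\to[0,\infty)$ with $\int_\Omega f=1$, $p\ge1$, $x_1,x_2\in\Omega$, and $h_1,h_2:[0,1]\to[0,\infty)$ continuous and non-decreasing, and assume $|G(s)-G(t)|<|s-t|$ for all $s\neq t$ in $\mathbb R$. Let $\psi_0:\Omega\to\{0,1\}$ be any Borel function and define recursively, for $j\ge0$, $m_j=\int_\Omega(1-\psi_j)f\,dx$, $t_{j+1}=h_2(1-m_j)-h_1(m_j)$, and $\psi_{j+1}(x)=0$ if $\tau(x)<t_{j+1}$, $\psi_{j+1}(x)=1$ otherwise. Then $t_j\to\bar t$ as $j\to\infty$, and $\psi_j\to\bar\psi$ uniformly on every compact subset of $\Omega\setminus\{\tau=\bar t\}$.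
   Context: $\tau(x)=|x-x_1|^p-|x-x_2|^p$, $m(t)=\int_{\{x\in\Omega:\tau(x)<t\}}f\,dx$, $G(t)=h_2(1-m(t))-h_1(m(t))$. Under the hypotheses there is a unique $\bar t\in\mathbb R$ with $G(\bar t)=\bar t$; the (unique) equilibrium is $A_1=\{\tau<\bar t\}$, $A_2=\{\tau>\bar t\}$, and $\bar\psi(x)=0$ if $\tau(x)<\bar t$, $\bar\psi(x)=1$ if $\tau(x)>\bar t$. *)

(* R^d is modelled as d.-tuple R, which
   carries the product (= Borel) sigma-algebra from mathcomp-analysis; its
   topology is that of 'rV[R]_d, transported along [row_of_tuple]. *)
From HB Require Import structures.
From mathcomp Require Import all_boot all_order all_algebra.
From mathcomp Require Import all_classical all_reals all_analysis.
Set Implicit Arguments. Unset Strict Implicit. Unset Printing Implicit Defensive.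
Import Order.TTheory GRing.Theory Num.Theory.
Import numFieldNormedType.Exports.
Local Open Scope classical_set_scope.
Local Open Scope ring_scope.

Section Defs.
Context {R : realType} {d : nat}.
Local Notation T := (d.-tuple R).

Definition tsub (x y : T) : T := [tuple tnth x i - tnth y i | i < d].

Definition enorm (x : T) : R := Num.sqrt (\sum_(i < d) tnth x i ^+ 2).

Definition row_of_tuple (x : T) : 'rV[R]_d := \row_i tnth x i.

Definition compactRd (K : set T) : Prop := compact (row_of_tuple @` K).

Definition boundedRd (A : set T) : Prop :=
  exists M : R, forall x, A x -> enorm x <= M.

(* Lebesgue measure on the Borel sets of R^d: the measure giving every
   closed box its volume (this determines it uniquely). *)
Definition is_lebesgue_Rd (mu : set T -> \bar R) : Prop :=
  forall a b : T,
    mu [set x | forall i : 'I_d, tnth a i <= tnth x i <= tnth b i] =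
    (\prod_(i < d) Num.max 0 (tnth b i - tnth a i))%:E.

Definition tau (p : R) (x1 x2 x : T) : R :=
  enorm (tsub x x1) `^ p - enorm (tsub x x2) `^ p.

Section Iter.
Variable mu : set T -> \bar R.
Variables (Omega : set T) (f : T -> R) (p : R) (x1 x2 : T) (h1 h2 : R -> R).

Definition mfun (t : R) : R :=
  fine (\int[mu]_(x in Omega `&` [set x | tau p x1 x2 x < t]) (f x)%:E).

Definition Gfun (t : R) : R := h2 (1 - mfun t) - h1 (mfun t).

Definition mass (psi : T -> R) : R :=
  fine (\int[mu]_(x in Omega) ((1 - psi x) * f x)%:E).

Definition next_t (psi : T -> R) : R := h2 (1 - mass psi) - h1 (mass psi).

Definition step_psi (t : R) : T -> R :=
  fun x => if tau p x1 x2 x < t then 0 else 1.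

Fixpoint psi_seq (psi0 : T -> R) (j : nat) : T -> R :=
  match j with
  | 0 => psi0
  | j'.+1 => step_psi (next_t (psi_seq psi0 j'))
  end.

(* t_seq psi0 j = t_{j+1} *)
Definition t_seq (psi0 : T -> R) (j : nat) : R := next_t (psi_seq psi0 j).

End Iter.
End Defs.

From Pilot Require Import Defs.
From HB Require Import structures.
From mathcomp Require Import all_boot all_order all_algebra.
From mathcomp Require Import all_classical all_reals all_analysis.
From mathcomp Require Import lra.
Import Order.TTheory GRing.Theory Num.Theory.
Import numFieldNormedType.Exports.
Local Open Scope classical_set_scope.
Local Open Scope ring_scope.

(* Since [m] takes values in [0, 1] and [h1], [h2] are monotone, [G] has
   bounded range; being a strict contraction it is continuous, so it has a
   fixed point [tbar] by the intermediate value theorem, unique by strictness.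
   The mass of [psi_(j+1)] is [m(t_(j+1))], so [t_(j+2) = G(t_(j+1))] and the
   distances [|t_j - tbar|] decrease to some [r]; if [r > 0], comparing [G]
   with its values at [tbar +- r] pushes a later distance below [r].  On a
   compact [K] avoiding [tau = tbar], the continuous [tau] stays [e]-far from
   [tbar], so once [|t_j - tbar| < e] the thresholds [t_j] and [tbar] cut [K]
   identically. *)

Section StrictContraction.
Context {R : realType} {G : R -> R}.
Hypothesis G_strict : forall s t, s != t -> `|G s - G t| < `|s - t|.

Lemma contraction_dist_le s t : `|G s - G t| <= `|s - t|.
Proof. by have [->|/G_strict/ltW//] := eqVneq s t; rewrite !subrr. Qed.

Lemma contraction_continuous : continuous G.
Proof.
move=> x; apply/cvgrPdist_lt => e e0; near=> y.
apply: le_lt_trans (contraction_dist_le x y) _; near: y.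
exact: (cvgrPdist_lt _ _).1 (@cvg_id _ (nbhs x)) e e0.
Unshelve. all: by end_near.
Qed.

Lemma contraction_fixpoint_uniq {s t : R} : G s = s -> G t = t -> s = t.
Proof.
move=> Gs Gt; apply/eqP/negPn/negP => /G_strict.
by rewrite Gs Gt ltxx.
Qed.

Lemma contraction_fixpoint_exists {lo hi : R} : (forall t, lo <= G t <= hi) ->
  exists t, G t = t.
Proof.
move=> G_range; have /andP[lo_G0 G0_hi] := G_range 0.
have lohi : lo <= hi := le_trans lo_G0 G0_hi.
have cont : {within `[lo, hi], continuous (fun t => G t - t)}.
  apply: continuous_subspaceT => x.
  exact: continuousB (contraction_continuous x) (@cvg_id _ _).
have [|c _ Gc] := @IVT R _ lo hi 0 lohi cont.
  have /andP[lo_Glo _] := G_range lo; have /andP[_ Ghi_hi] := G_range hi.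
  by rewrite ge_min le_max subr_ge0 lo_Glo /= !subr_le0 Ghi_hi orbT.
by exists c; apply/eqP; rewrite -subr_eq0 Gc.
Qed.

(* Compare [G s] with [G (tb + r)] or [G (tb - r)], whichever point lies on
   the same side of [tb] as [s]. *)
Lemma contraction_dist_step s {tb r} : G tb = tb -> 0 <= r ->
  `|G s - tb| <=
    `| `|s - tb| - r | + Num.max `|G (tb + r) - tb| `|G (tb - r) - tb|.
Proof.
move=> Gtb r0.
have step a : `|G s - tb| <= `|s - a| + `|G a - tb|.
  by apply: le_trans (ler_distD (G a) _ _) _; rewrite lerD2r contraction_dist_le.
have [tb_s|s_tb] := leP tb s.
  apply: le_trans (step (tb + r)) _; rewrite lerD ?le_max ?lexx //.
  by rewrite [`|s - tb|]ger0_norm ?subr_ge0 // opprD addrA.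
apply: le_trans (step (tb - r)) _; rewrite lerD ?le_max ?lexx ?orbT //.
have -> : s - (tb - r) = - (- (s - tb) - r) by lra.
by rewrite [`|s - tb|]ltr0_norm ?subr_lt0 // normrN.
Qed.

Lemma contraction_iter_cvg {tb : R} {u : nat -> R} : G tb = tb ->
  (forall n, u n.+1 = G (u n)) -> u n @[n --> \oo] --> tb.
Proof.
move=> Gtb u_iter; pose D n := `|u n - tb|.
have D_step n : D n.+1 <= D n by rewrite /D u_iter -{1}Gtb contraction_dist_le.
have D_noninc : nonincreasing_seq D.
  by apply/nonincreasing_seqP => n; exact: D_step.
have D_lb : has_lbound (range D) by exists 0 => _ [n _ <-]; exact: normr_ge0.
have [r [D_cvg r_le_D r_ge0]] : exists r, [/\ D n @[n --> \oo] --> r,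
    forall n, r <= D n & 0 <= r].
  exists (inf (range D)); split; first exact: nonincreasing_cvgn.
  - by move=> n; apply: ge_inf => //; exists n.
  - by apply: lb_le_inf; [exists (D 0), 0|move=> _ [n _ <-]; exact: normr_ge0].
have r0 : r = 0.
  apply/eqP; rewrite eq_le r_ge0 andbT.
  rewrite leNgt; apply/negP => r_gt0.
  pose c := Num.max `|G (tb + r) - tb| `|G (tb - r) - tb|.
  have c_lt_r : c < r.
    have at_dist_r a : `|a - tb| = r -> `|G a - tb| < r.
      move=> ar; rewrite -ar -{1}Gtb; apply: G_strict.
      by apply: contraTneq r_gt0 => a_tb; rewrite -ar a_tb subrr normr0 ltxx.
    by rewrite gt_max !at_dist_r // addrAC subrr add0r ?normrN gtr0_norm.
  have [n n_big] : exists n, D n < r + (r - c).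
    have /cvgrPdist_lt/(_ (r - c)) := D_cvg.
    rewrite subr_gt0 c_lt_r => /(_ isT) [N _ HN]; exists N.
    by have := HN N (leqnn N); rewrite /= ltr_distlC => /andP[].
  have := contraction_dist_step (u n) Gtb (ltW r_gt0).
  rewrite -u_iter -/(D n.+1) -/(D n) -/c ger0_norm ?subr_ge0 ?r_le_D //.
  by have := r_le_D n.+1; lra.
apply/subr_cvg0/norm_cvg0P; by rewrite -r0.
Qed.

End StrictContraction.

Lemma normr_powR_continuous (R : realType) (p : R) : 1 <= p ->
  continuous (fun a : R => `|a| `^ p).
Proof.
move=> p_ge1 x; have p_neq0 : p != 0 by rewrite gt_eqF //; lra.
have [->|x_neq0] := eqVneq x 0.
  (* near [0], [|a|^p <= |a|] since [p >= 1] *)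
  apply/cvgrPdist_lt => e e_gt0; rewrite /= normr0 powR0 //; near=> a.
  rewrite sub0r normrN ger0_norm ?powR_ge0 //.
  have [->|a_neq0] := eqVneq a 0; first by rewrite normr0 powR0.
  have : `|0 - a| < Num.min e 1.
    near: a; apply: (cvgrPdist_lt _ _).1 (@cvg_id _ _) _ _.
    by rewrite lt_min e_gt0 ltr01.
  rewrite sub0r normrN lt_min => /andP[a_e a_1].
  apply: le_lt_trans a_e; apply: ge1r_powR => //.
  by rewrite normr_gt0 a_neq0 ltW.
have x_gt0 : 0 < `|x| by rewrite normr_gt0.
apply: (@cvg_trans _ ((fun a : R => expR (p * ln `|a|)) @ x)).
  apply: near_eq_cvg; near=> a.
  have : `|x - a| < `|x|.
    by near: a; exact: (cvgrPdist_lt _ _).1 (@cvg_id _ _) _ x_gt0.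
  rewrite /powR normr_eq0; case: eqP => [->|//].
  by rewrite subr0 ltxx.
rewrite /= /powR normr_eq0 (negbTE x_neq0).
apply: (@continuous_comp _ _ _ (fun a : R => p * ln `|a|) expR).
  apply: (@continuous_comp _ _ _ (fun a : R => ln `|a|) ( *%R p)).
    exact: continuous_comp (@norm_continuous _ _ x) (continuous_ln x_gt0).
  exact: continuousM (cvg_cst _) (@cvg_id _ _).
exact: continuous_expR.
Unshelve. all: by end_near.
Qed.

Lemma compact_continuous_avoid {T : topologicalType} {R : realType}
    {g : T -> R} {K : set T} {t : R} :
  compact K -> continuous g -> (forall x, K x -> g x <> t) ->
  exists2 e, 0 < e & forall x, K x -> e <= `|g x - t|.
Proof.
move=> K_compact g_cont g_neq_t.
have gK_closed : closed (g @` K).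
  apply: compact_closed; first exact: Rhausdorff.
  by apply: continuous_compact => //; exact: continuous_subspaceT.
have : nbhs t (~` (g @` K)).
  apply: open_nbhs_nbhs; split; first exact: closed_openC.
  by move=> [x Kx /g_neq_t].
move=> /nbhs_ballP[e e_gt0 ball_out]; exists e => // x Kx.
rewrite leNgt; apply/negP => gx_close.
by apply: (ball_out (g x)); [rewrite -ball_normE /ball_ /= distrC|exists x].
Qed.

Lemma ltr_threshold_perturb (R : realDomainType) (a t t' e : R) :
  `|t - t'| < e -> e <= `|a - t| -> (a < t') = (a < t).
Proof.
rewrite ltr_distlC => /andP[t'_lo t'_hi].
by rewrite ler_normr => /orP[] a_far; case: ltP => ?; case: ltP => ? //; lra.
Qed.

Section TauContinuity.
Context {R : realType} {d : nat} {p : R} {x1 x2 : d.-tuple R}.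
Hypothesis p_ge1 : 1 <= p.

Definition row_dist (c : d.-tuple R) (M : 'rV[R]_d) : R :=
  Num.sqrt (\sum_(i < d) (M 0 i - tnth c i) ^+ 2).

Lemma enorm_tsub_row (x c : d.-tuple R) :
  enorm (tsub x c) = row_dist c (row_of_tuple x).
Proof.
rewrite /enorm /row_dist; congr Num.sqrt; apply: eq_bigr => i _.
by rewrite mxE tnth_mktuple.
Qed.

Lemma row_dist_continuous c : continuous (row_dist c).
Proof.
move=> M; apply: continuous_comp; last exact: sqrt_continuous.
apply: (@continuous_big R 'I_d +%R 0 xpredT add_continuous) => i _ N.
have coord_sub : {for N, continuous (fun M : 'rV[R]_d => M 0 i - tnth c i)}.
  by apply: continuousB; [exact: coord_continuous|exact: cst_continuous].
exact: (continuousM coord_sub coord_sub).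
Qed.

Definition tau_row (M : 'rV[R]_d) : R :=
  `|row_dist x1 M| `^ p - `|row_dist x2 M| `^ p.

Lemma tau_rowE x : tau p x1 x2 x = tau_row (row_of_tuple x).
Proof.
by rewrite /tau /tau_row !enorm_tsub_row !ger0_norm ?sqrtr_ge0.
Qed.

Lemma tau_row_continuous : continuous tau_row.
Proof.
have powd_cont c : continuous (fun M => `|row_dist c M| `^ p).
  move=> M; apply: (@continuous_comp _ _ _ (row_dist c) (fun a => `|a| `^ p)).
    exact: row_dist_continuous.
  exact: normr_powR_continuous.
by move=> M; exact: continuousB (powd_cont x1 M) (powd_cont x2 M).
Qed.

Lemma tau_avoid_on_compact {K : set (d.-tuple R)} {t : R} : compactRd K ->
  (forall x, K x -> tau p x1 x2 x <> t) ->
  exists2 e, 0 < e & forall x, K x -> e <= `|tau p x1 x2 x - t|.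
Proof.
move=> K_compact tau_neq_t.
have [|e e_gt0 e_le] :=
    compact_continuous_avoid (t := t) K_compact tau_row_continuous.
  by move=> _ [x Kx <-]; rewrite -tau_rowE; exact: tau_neq_t.
by exists e => // x Kx; rewrite tau_rowE; apply: e_le; exists x.
Qed.

Lemma step_psi_near_on_compact {t : nat -> R} {tb : R} {K : set (d.-tuple R)} :
  t n @[n --> \oo] --> tb -> compactRd K ->
  (forall x, K x -> tau p x1 x2 x <> tb) ->
  \forall n \near \oo, forall x, K x ->
    step_psi p x1 x2 (t n) x = step_psi p x1 x2 tb x.
Proof.
move=> t_cvg K_compact tau_neq_tb.
have [e e_gt0 tau_far] := tau_avoid_on_compact K_compact tau_neq_tb.
near=> n => x Kx; rewrite /step_psi (@ltr_threshold_perturb _ _ tb _ e) //.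
  near: n; exact: (cvgrPdist_lt _ _).1 t_cvg _ e_gt0.
exact: tau_far.
Unshelve. all: by end_near.
Qed.

End TauContinuity.

Section ThresholdIteration.
Context {R : realType} {d : nat} {mu : {measure set (d.-tuple R) -> \bar R}}.
Context {Omega : set (d.-tuple R)} {f : d.-tuple R -> R} {p : R}.
Context {x1 x2 : d.-tuple R} {h1 h2 : R -> R}.
Local Notation m := (Defs.mfun mu Omega f p x1 x2).
Local Notation G := (Gfun mu Omega f p x1 x2 h1 h2).

Lemma mass_step_psi t : mass mu Omega f (step_psi p x1 x2 t) = m t.
Proof.
rewrite /mass /Defs.mfun /integral.
have -> : (fun x => ((1 - step_psi p x1 x2 t x) * f x)%:E) \_ Omega =
    (fun x => (f x)%:E) \_ (Omega `&` [set x | tau p x1 x2 x < t]).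
  apply/funext => x; rewrite /patch in_setI /step_psi.
  have -> : (x \in [set y | tau p x1 x2 y < t]) = (tau p x1 x2 x < t).
    by apply/idP/idP; rewrite inE.
  case: (x \in Omega) => //=.
  by case: ifP => _; rewrite ?subr0 ?mul1r ?subrr ?mul0r.
by [].
Qed.

Lemma t_seqS psi0 j :
  t_seq mu Omega f p x1 x2 h1 h2 psi0 j.+1 =
  G (t_seq mu Omega f p x1 x2 h1 h2 psi0 j).
Proof. by rewrite /t_seq /= /next_t /Gfun mass_step_psi. Qed.

Hypothesis f_ge0 : forall x, Omega x -> 0 <= f x.
Hypothesis f_int1 : (\int[mu]_(x in Omega) (f x)%:E = 1%:E)%E.

Lemma mfun_ge0_le1 t : 0 <= m t <= 1.
Proof.
rewrite /Defs.mfun; set A := Omega `&` _.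
have fA_ge0 x : A x -> (0 <= (f x)%:E)%E by move=> [Ox _]; rewrite lee_fin f_ge0.
have int_ge0 : (0 <= \int[mu]_(x in A) (f x)%:E)%E by exact: integral_ge0.
have int_le1 : (\int[mu]_(x in A) (f x)%:E <= 1%:E)%E.
  rewrite -f_int1 ge0_integralE // ge0_integralE; last first.
    by move=> x Ox; rewrite lee_fin f_ge0.
  apply: ereal_sup_le => _ [h /= h_le <-]; exists h => //= x.
  apply: le_trans (h_le x) _; rewrite /patch.
  have [xA|xA] := boolP (x \in A).
    by have [xO _] := (set_mem xA : A x); rewrite mem_set.
  by case: ifPn => // /[!inE] Ox; rewrite lee_fin f_ge0.
have int_fin : (\int[mu]_(x in A) (f x)%:E)%E \is a fin_num.
  by rewrite ge0_fin_numE // (le_lt_trans int_le1) ?ltry.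
by rewrite fine_ge0 //= -lee_fin (fineK int_fin).
Qed.

Hypothesis h1_nd : forall s t : R, 0 <= s -> s <= t -> t <= 1 -> h1 s <= h1 t.
Hypothesis h2_nd : forall s t : R, 0 <= s -> s <= t -> t <= 1 -> h2 s <= h2 t.

Lemma Gfun_bounded t : h2 0 - h1 1 <= G t <= h2 1 - h1 0.
Proof.
have /andP[m_ge0 m_le1] := mfun_ge0_le1 t; rewrite /Gfun.
have m'_ge0 : 0 <= 1 - m t by rewrite subr_ge0.
have m'_le1 : 1 - m t <= 1 by rewrite gerBl.
have := h2_nd _ _ (lexx 0) m'_ge0 m'_le1; have := h2_nd _ _ m'_ge0 m'_le1 (lexx 1).
have := h1_nd _ _ (lexx 0) m_ge0 m_le1; have := h1_nd _ _ m_ge0 m_le1 (lexx 1).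
by move=> *; apply/andP; split; lra.
Qed.

End ThresholdIteration.

Theorem proposition5p1 (R : realType) (d : nat)
  (mu : {measure set (d.-tuple R) -> \bar R})
  (Omega : set (d.-tuple R)) (f : d.-tuple R -> R) (p : R)
  (x1 x2 : d.-tuple R) (h1 h2 : R -> R) (psi0 : d.-tuple R -> R) :
  is_lebesgue_Rd mu ->
  measurable Omega -> boundedRd Omega ->
  measurable_fun Omega f -> (forall x, Omega x -> 0 <= f x) ->
  (\int[mu]_(x in Omega) (f x)%:E = 1%:E)%E ->
  1 <= p -> Omega x1 -> Omega x2 ->
  {within [set s : R | 0 <= s <= 1], continuous h1} ->
  {within [set s : R | 0 <= s <= 1], continuous h2} ->
  (forall s t : R, 0 <= s -> s <= t -> t <= 1 -> h1 s <= h1 t) ->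
  (forall s t : R, 0 <= s -> s <= t -> t <= 1 -> h2 s <= h2 t) ->
  (forall s : R, 0 <= s <= 1 -> 0 <= h1 s) ->
  (forall s : R, 0 <= s <= 1 -> 0 <= h2 s) ->
  (forall s t : R, s != t ->
     `|Gfun mu Omega f p x1 x2 h1 h2 s - Gfun mu Omega f p x1 x2 h1 h2 t|
       < `|s - t|) ->
  measurable_fun Omega psi0 ->
  (forall x, Omega x -> psi0 x = 0 \/ psi0 x = 1) ->
  exists tbar : R,
    [/\ Gfun mu Omega f p x1 x2 h1 h2 tbar = tbar,
        (forall t : R, Gfun mu Omega f p x1 x2 h1 h2 t = t -> t = tbar),
        t_seq mu Omega f p x1 x2 h1 h2 psi0 j @[j --> \oo] --> tbar &
        forall K : set (d.-tuple R),
          compactRd K ->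
          K `<=` Omega `\` [set x | tau p x1 x2 x = tbar] ->
          forall eps : R, 0 < eps -> exists N : nat, forall j : nat, (N <= j)%N ->
            forall x, K x ->
              `|psi_seq mu Omega f p x1 x2 h1 h2 psi0 j x
                - step_psi p x1 x2 tbar x| < eps].
Proof.
(* Strict contractivity of [G] makes the continuity and nonnegativity of [h1],
   [h2] and all measurability, boundedness and Lebesgue assumptions unneeded. *)
move=> _ _ _ _ f_ge0 f_int1 p_ge1 _ _ _ _ h1_nd h2_nd _ _ G_strict _ _.
have [tb Gtb] := contraction_fixpoint_exists G_strict
  (Gfun_bounded f_ge0 f_int1 h1_nd h2_nd).
have t_cvg : t_seq mu Omega f p x1 x2 h1 h2 psi0 j @[j --> \oo] --> tb.
  by apply: (contraction_iter_cvg G_strict Gtb) => j; rewrite t_seqS.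
exists tb; split => // [t Gt|K K_compact K_sub eps eps_gt0].
  exact: (contraction_fixpoint_uniq G_strict Gt Gtb).
have [N _ psi_eq] := step_psi_near_on_compact p_ge1 t_cvg K_compact
  (fun x Kx => (K_sub x Kx).2).
exists N.+1 => -[//|j] N_le_j x Kx.
by rewrite /= psi_eq // subrr normr0.
Qed.
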